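(* Let $m,n\ge1$, $a\in(0,\infty)^m$, $b\in(0,\infty)^n$, and let $\Omega$ be a real $m\times n$ matrix. Let $(A,B)_0$ be a point in the interior of $\tilde{\mathcal A}$ and define $(A,B)_{k+1}=T_2(T_1((A,B)_k))$. If $(\overline A,\overline B)$ is a limit point of the sequence $((A,B)_k)_k$, then $$F(T_1(\overline A,\overline B))=F(T_2(T_1(\overline A,\overline B)))=F(\overline A,\overline B).$$
   Context: $\mathcal A$ is the set of pairs $(A,B)$ of $(m+1)\times(n+1)$ real matrices (indices $i=0,\dots,m$, $j=0,\dots,n$) with: $A_{ij},B_{ij}\ge0$; $a_i=\sum_{j=0}^nA_{ij}$ for $i=1,\dots,m$; $A_{0j}=0$ for all $j$; $b_j=\sum_{i=0}^mB_{ij}$ for $j=1,\dots,n$; $B_{i0}=0$ for all $i$. $F(A,B)=\sum_{i=1}^m\sum_{j=1}^n\sqrt{A_{ij}B_{ij}}\,\Omega_{ij}$. $\tilde{\mathcal A}\subset\mathcal A$ consists of those $(A,B)$ with: (1) $A_{ij}=B_{ij}=0$ whenever $i,j\ge1$ and $\Omega_{ij}\le0$; (2) for $j\ge1$, $B_{0j}=0$ if there is $i\ge1$ with $\Omega_{ij}>0$; (3) for $i\ge1$, $A_{i0}=0$ if there is $j\ge1$ with $\Omega_{ij}>0$. $T_1(A,B)=(E,B)$ where $E_{ij}=A_{ij}$ if $i=0$ or $j=0$, and otherwise $E_{ij}=a_iB_{ij}\Omega_{ij}^2/\sum_{k=1}^nB_{ik}\Omega_{ik}^2$ if this denominator is positive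 and $0$ otherwise. $T_2(A,B)=(A,E)$ where $E_{ij}=B_{ij}$ if $i=0$ or $j=0$, and otherwise $E_{ij}=b_jA_{ij}\Omega_{ij}^2/\sum_{k=1}^mA_{kj}\Omega_{kj}^2$ if this denominator is positive and $0$ otherwise. ''Interior'' refers to the interior of $\tilde{\mathcal A}$ relative to the affine space it spans. *)

From mathcomp Require Import all_boot all_order all_algebra.
From mathcomp Require Import reals.
Set Implicit Arguments. Unset Strict Implicit. Unset Printing Implicit Defensive.
Import Order.TTheory GRing.Theory Num.Theory.
Local Open Scope ring_scope.

Section Defs.
Variables (R : realType) (m n : nat).

Definition pmx := ('M[R]_(m.+1, n.+1) * 'M[R]_(m.+1, n.+1))%type.

(* The index i in 1..m is represented as [lift ord0 i] for i : 'I_m;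
   similarly for columns. Omega : 'M_(m,n), a : 'I_m -> R, b : 'I_n -> R
   correspond to Omega_{i+1,j+1}, a_{i+1}, b_{j+1}. *)

Definition inA (a : 'I_m -> R) (b : 'I_n -> R) (p : pmx) : Prop :=
  let A := p.1 in let B := p.2 in
  [/\ forall i j, 0 <= A i j /\ 0 <= B i j,
      forall i : 'I_m, a i = \sum_(j < n.+1) A (lift ord0 i) j,
      forall j, A ord0 j = 0,
      forall j : 'I_n, b j = \sum_(i < m.+1) B i (lift ord0 j)
    & forall i, B i ord0 = 0].

Definition inAt (Omega : 'M[R]_(m, n)) (a : 'I_m -> R) (b : 'I_n -> R)
    (p : pmx) : Prop :=
  let A := p.1 in let B := p.2 in
  [/\ inA a b p,
      forall (i : 'I_m) (j : 'I_n), Omega i j <= 0 ->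
         A (lift ord0 i) (lift ord0 j) = 0 /\ B (lift ord0 i) (lift ord0 j) = 0,
      forall j : 'I_n, (exists i : 'I_m, 0 < Omega i j) -> B ord0 (lift ord0 j) = 0
    & forall i : 'I_m, (exists j : 'I_n, 0 < Omega i j) -> A (lift ord0 i) ord0 = 0].

Definition Fobj (Omega : 'M[R]_(m, n)) (p : pmx) : R :=
  \sum_(i < m) \sum_(j < n)
     Num.sqrt (p.1 (lift ord0 i) (lift ord0 j) * p.2 (lift ord0 i) (lift ord0 j))
       * Omega i j.

Definition T1 (Omega : 'M[R]_(m, n)) (a : 'I_m -> R) (p : pmx) : pmx :=
  (\matrix_(i < m.+1, j < n.+1)
     match unlift ord0 i, unlift ord0 j with
     | Some i', Some j' =>
         let d := \sum_(k < n) p.2 i (lift ord0 k) * Omega i' k ^+ 2 in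
         if 0 < d then a i' * p.2 i j * Omega i' j' ^+ 2 / d else 0
     | _, _ => p.1 i j
     end, p.2).

Definition T2 (Omega : 'M[R]_(m, n)) (b : 'I_n -> R) (p : pmx) : pmx :=
  (p.1, \matrix_(i < m.+1, j < n.+1)
     match unlift ord0 i, unlift ord0 j with
     | Some i', Some j' =>
         let d := \sum_(k < m) p.1 (lift ord0 k) j * Omega k j' ^+ 2 in
         if 0 < d then b j' * p.1 i j * Omega i' j' ^+ 2 / d else 0
     | _, _ => p.2 i j
     end).

Definition close (p q : pmx) (eps : R) : Prop :=
  forall i j, `|p.1 i j - q.1 i j| < eps /\ `|p.2 i j - q.2 i j| < eps.

Definition aff_span (S : pmx -> Prop) (q : pmx) : Prop :=
  exists (N : nat) (c : 'I_N -> R) (x : 'I_N -> pmx),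
    [/\ forall k, S (x k), \sum_(k < N) c k = 1,
        q.1 = \sum_(k < N) c k *: (x k).1
      & q.2 = \sum_(k < N) c k *: (x k).2].

Definition rel_interior (S : pmx -> Prop) (p : pmx) : Prop :=
  S p /\ exists2 eps : R, 0 < eps &
    forall q, aff_span S q -> close q p eps -> S q.

Definition limit_point (s : nat -> pmx) (L : pmx) : Prop :=
  forall eps : R, 0 < eps -> forall N : nat, exists2 k, (N <= k)%N & close (s k) L eps.

End Defs.

(* By Cauchy-Schwarz, if the rows of A satisfy sum_j A_ij <= a_i then row i
   contributes at most sqrt (a_i * sum_j B_ij Omega_ij^2) to F, and T1 attains this
   bound as soon as B vanishes where Omega < 0; symmetrically for columns and T2.
   The iteration preserves "A, B >= 0, row sums <= a, column sums <= b, B = 0 where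
   Omega < 0", so F(p) <= F(T1 p) <= F(T2 (T1 p)): F increases along the sequence,
   hence stays below F(L), and L inherits the invariant.  T1 is continuous at L except
   on the rows where sum_j B_ij Omega_ij^2 vanishes at L; zeroing those rows gives a
   lower bound for F o T2 o T1 that is continuous at L, whence F(T2 (T1 L)) <= F(L),
   which closes the chain F(L) <= F(T1 L) <= F(T2 (T1 L)) <= F(L). *)

From mathcomp Require Import all_boot all_order all_algebra.
From mathcomp Require Import boolp classical_sets reals topology normedtype sequences realfun.
From mathcomp Require Import ring lra.
(* Imported last so that [limit_point] and [close] denote the definitions of
   [Defs] and not their topological namesakes. *)
From Pilot Require Import Defs.
Import Order.TTheory GRing.Theory Num.Theory numFieldNormedType.Exports.
Local Open Scope ring_scope.

Section CauchySchwarz.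
Context {R : rcfType} {N : nat}.
Implicit Types (u v x y w : 'I_N -> R) (al : R).

Lemma sqr_sum_mul_le u v :
  (\sum_k u k * v k) ^+ 2 <= (\sum_k u k ^+ 2) * (\sum_k v k ^+ 2).
Proof.
have lagrange : \sum_i \sum_j (u i * v j - u j * v i) ^+ 2 =
    (\sum_i \sum_j u i ^+ 2 * v j ^+ 2) + (\sum_i \sum_j u j ^+ 2 * v i ^+ 2)
    - 2 * \sum_i \sum_j u i * v i * (u j * v j).
  rewrite mulr_sumr -!big_split -sumrN -big_split /=; apply: eq_bigr => i _.
  rewrite mulr_sumr -!big_split -sumrN -big_split /=; apply: eq_bigr => j _.
  ring.
have : 0 <= \sum_i \sum_j (u i * v j - u j * v i) ^+ 2.
  by do 2!apply: sumr_ge0 => ? _; apply: sqr_ge0.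
have swap : \sum_i \sum_j u j ^+ 2 * v i ^+ 2 = \sum_i \sum_j u i ^+ 2 * v j ^+ 2.
  exact: exchange_big.
have sqr_sum : (\sum_k u k * v k) ^+ 2 = \sum_i \sum_j u i * v i * (u j * v j).
  by rewrite expr2 mulr_suml; apply: eq_bigr => i _; rewrite mulr_sumr.
have prod_sums : (\sum_k u k ^+ 2) * (\sum_k v k ^+ 2) =
    \sum_i \sum_j u i ^+ 2 * v j ^+ 2.
  by rewrite mulr_suml; apply: eq_bigr => i _; rewrite mulr_sumr.
rewrite lagrange swap sqr_sum prod_sums; lra.
Qed.

Definition wnorm2 y w := \sum_k y k * w k ^+ 2.

Lemma wnorm2_ge0 y w : (forall k, 0 <= y k) -> 0 <= wnorm2 y w.
Proof. by move=> y_ge0; apply: sumr_ge0 => k _; rewrite mulr_ge0 ?sqr_ge0. Qed.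

Lemma sum_sqrt_mul_le x y w al :
  (forall k, 0 <= x k) -> (forall k, 0 <= y k) -> \sum_k x k <= al ->
  \sum_k Num.sqrt (x k * y k) * w k <= Num.sqrt (al * wnorm2 y w).
Proof.
move=> x_ge0 y_ge0 sum_x_le.
pose z k := Num.sqrt (y k * w k ^+ 2).
have termwise : \sum_k Num.sqrt (x k * y k) * w k <= \sum_k Num.sqrt (x k) * z k.
  apply: ler_sum => k _; rewrite /z sqrtrM // [in X in _ <= X]sqrtrM // sqrtr_sqr.
  by rewrite mulrA ler_wpM2l ?mulr_ge0 ?sqrtr_ge0 // ler_norm.
apply: (le_trans termwise); set S := \sum_k _.
apply: (@le_trans _ _ (Num.sqrt (S ^+ 2))); first by rewrite sqrtr_sqr ler_norm.
have sum_sqr_x : \sum_k Num.sqrt (x k) ^+ 2 = \sum_k x k.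
  by apply: eq_bigr => k _; rewrite sqr_sqrtr.
have sum_sqr_z : \sum_k z k ^+ 2 = wnorm2 y w.
  by apply: eq_bigr => k _; rewrite sqr_sqrtr // mulr_ge0 ?y_ge0 ?sqr_ge0.
apply: ler_wsqrtr; apply: (le_trans (sqr_sum_mul_le _ _)).
by rewrite sum_sqr_x sum_sqr_z ler_wpM2r // wnorm2_ge0.
Qed.

Definition cs_weight al y w k :=
  if 0 < wnorm2 y w then al * y k * w k ^+ 2 / wnorm2 y w else 0.

Lemma cs_weight_ge0 al y w k :
  0 <= al -> (forall l, 0 <= y l) -> 0 <= cs_weight al y w k.
Proof.
move=> al_ge0 y_ge0; rewrite /cs_weight; case: ifPn => // D_gt0.
by apply: divr_ge0; [rewrite mulr_ge0 ?sqr_ge0 ?mulr_ge0 ?y_ge0 | exact: ltW].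
Qed.

Lemma cs_weight_eq0 al y w k : y k = 0 -> cs_weight al y w k = 0.
Proof. by move=> yk0; rewrite /cs_weight yk0 mulr0 !mul0r if_same. Qed.

Lemma sum_cs_weight_le al y w : 0 <= al -> \sum_k cs_weight al y w k <= al.
Proof.
move=> al_ge0; rewrite /cs_weight.
have [D_gt0|D_le0] := boolP (0 < wnorm2 y w); last by rewrite big1 // => k _; rewrite ifN.
have -> : \sum_k al * y k * w k ^+ 2 / wnorm2 y w = al * wnorm2 y w / wnorm2 y w.
  by rewrite {2 3}/wnorm2 mulr_sumr mulr_suml; apply: eq_bigr => k _; rewrite mulrA.
by rewrite mulfK ?gt_eqF.
Qed.

(* The weight [cs_weight] is the equality case of [sum_sqrt_mul_le]. *)
Lemma sum_sqrt_cs_weight al y w :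
  0 <= al -> (forall k, 0 <= y k) -> (forall k, w k < 0 -> y k = 0) ->
  \sum_k Num.sqrt (cs_weight al y w k * y k) * w k = Num.sqrt (al * wnorm2 y w).
Proof.
move=> al_ge0 y_ge0 y_pos; rewrite /cs_weight.
have D_ge0 : 0 <= wnorm2 y w := wnorm2_ge0 _ _ y_ge0.
set D := wnorm2 y w in D_ge0 *.
have [D_gt0|] := boolP (0 < D); last first.
  rewrite -leNgt => D_le0; have D0 : D = 0 by apply/le_anti/andP.
  by rewrite D0 mulr0 sqrtr0 big1 // => k _; rewrite !mul0r sqrtr0 mul0r.
transitivity (\sum_k Num.sqrt (al / D) * (y k * w k ^+ 2)).
  apply: eq_bigr => k _; have [wk_lt0|wk_ge0] := ltP (w k) 0.
    by rewrite (y_pos k wk_lt0) !(mulr0, mul0r, sqrtr0).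
  have -> : al * y k * w k ^+ 2 / D * y k = al / D * (y k * w k) ^+ 2.
    by rewrite exprMn; field; rewrite gt_eqF.
  rewrite sqrtrM ?divr_ge0 // sqrtr_sqr ger0_norm ?mulr_ge0 //.
  by rewrite expr2 !mulrA.
rewrite -(@mulr_sumr R) -/(wnorm2 y w) -/D -{2}(ger0_norm D_ge0) -sqrtr_sqr.
by rewrite -sqrtrM ?divr_ge0 // expr2 mulrA divfK ?gt_eqF.
Qed.

End CauchySchwarz.

Section EntrywiseConvergence.
Local Open Scope classical_set_scope.
Context {R : realType} {m n : nat}.
Implicit Types (s : nat -> pmx R m n) (L : pmx R m n).

Lemma cvg_sum {T : Type} {F : set_system T} {FF : Filter F} {N : nat}
    (f : 'I_N -> T -> R) (l : 'I_N -> R) :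
  (forall k, f k x @[x --> F] --> l k) -> \sum_k f k x @[x --> F] --> \sum_k l k.
Proof. by move=> f_cvg; apply: cvg_big => //; exact: add_continuous. Qed.

Lemma cvg_wnorm2 {N : nat} (y : nat -> 'I_N -> R) (y0 w : 'I_N -> R) :
  (forall k, y t k @[t --> \oo] --> y0 k) -> wnorm2 (y t) w @[t --> \oo] --> wnorm2 y0 w.
Proof. by move=> y_cvg; apply: cvg_sum => k; apply: cvgM; [exact: y_cvg | exact: cvg_cst]. Qed.

Definition cvg_entrywise s L := forall i j,
  (s t).1 i j @[t --> \oo] --> L.1 i j /\ (s t).2 i j @[t --> \oo] --> L.2 i j.

Lemma cvg_of_dist_lt_harmonic (f : nat -> R) (l : R) :
  (forall t, `|f t - l| < harmonic t) -> f t @[t --> \oo] --> l.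
Proof.
move=> f_close; apply/cvgrPdist_lt => e e_gt0.
move/cvgrPdist_lt: (@cvg_harmonic R) => /(_ e e_gt0); apply: filterS => t.
rewrite sub0r normrN ger0_norm ?harmonic_ge0 // distrC; exact: lt_trans.
Qed.

Lemma limit_point_subseq s L : limit_point s L ->
  exists2 phi : nat -> nat, (forall t, t <= phi t)%N & cvg_entrywise (s \o phi) L.
Proof.
move=> L_lim; have close_late t : exists k, (t <= k)%N /\ close (s k) L (harmonic t).
  by have [k] := L_lim _ (harmonic_gt0 t) t; exists k.
have [phi phiP] := choice close_late; exists phi => [t|i j]; first exact: (phiP t).1.
by split; apply: cvg_of_dist_lt_harmonic => t; have [] := (phiP t).2 i j.
Qed.

Lemma Fobj_cvg (Omega : 'M[R]_(m, n)) {s L} : cvg_entrywise s L ->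
  Fobj Omega (s t) @[t --> \oo] --> Fobj Omega L.
Proof.
move=> s_cvg; apply: cvg_sum => i; apply: cvg_sum => j; apply: cvgM; last exact: cvg_cst.
apply: continuous_cvg; first exact: sqrt_continuous.
by apply: cvgM; [exact: (s_cvg _ _).1 | exact: (s_cvg _ _).2].
Qed.

End EntrywiseConvergence.

Section Iteration.
Local Open Scope classical_set_scope.
Context {R : realType} {m n : nat} (Omega : 'M[R]_(m, n)).
Variables (a : 'I_m -> R) (b : 'I_n -> R).
Hypotheses (a_ge0 : forall i, 0 <= a i) (b_ge0 : forall j, 0 <= b j).
Implicit Types p : pmx R m n.

Definition Ain p (i : 'I_m) (j : 'I_n) : R := p.1 (lift ord0 i) (lift ord0 j).
Definition Bin p (i : 'I_m) (j : 'I_n) : R := p.2 (lift ord0 i) (lift ord0 j).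

Lemma FobjE p : Fobj Omega p = \sum_i \sum_j Num.sqrt (Ain p i j * Bin p i j) * Omega i j.
Proof. by []. Qed.

Lemma T1_inner p i j : Ain (T1 Omega a p) i j = cs_weight (a i) (Bin p i) (Omega i) j.
Proof. by rewrite /Ain /T1 /= mxE !liftK. Qed.

Lemma T2_inner p i j :
  Bin (T2 Omega b p) i j = cs_weight (b j) (Ain p ^~ j) (Omega ^~ j) i.
Proof. by rewrite /Bin /T2 /= mxE !liftK. Qed.

Definition row_bound p := \sum_i Num.sqrt (a i * wnorm2 (Bin p i) (Omega i)).
Definition col_bound p := \sum_j Num.sqrt (b j * wnorm2 (Ain p ^~ j) (Omega ^~ j)).

Definition feasible p :=
  [/\ forall i j, 0 <= Ain p i j, forall i j, 0 <= Bin p i j,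
      forall i, \sum_j Ain p i j <= a i & forall j, \sum_i Bin p i j <= b j].

Definition zero_on_neg (M : 'I_m -> 'I_n -> R) :=
  forall i j, Omega i j < 0 -> M i j = 0.

Lemma Fobj_le_row_bound p : feasible p -> Fobj Omega p <= row_bound p.
Proof.
case=> A_ge0 B_ge0 rows _; apply: ler_sum => i _.
by apply: sum_sqrt_mul_le; [exact: A_ge0 | exact: B_ge0 | exact: rows].
Qed.

Lemma Fobj_le_col_bound p : feasible p -> Fobj Omega p <= col_bound p.
Proof.
case=> A_ge0 B_ge0 _ cols; rewrite FobjE exchange_big; apply: ler_sum => j _ /=.
under eq_bigr => i _ do rewrite (mulrC (Ain _ _ _)).
by apply: sum_sqrt_mul_le; [exact: (B_ge0 ^~ j) | exact: (A_ge0 ^~ j) | exact: cols].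
Qed.

Lemma Fobj_T1 p : (forall i j, 0 <= Bin p i j) -> zero_on_neg (Bin p) ->
  Fobj Omega (T1 Omega a p) = row_bound p.
Proof.
move=> B_ge0 B0; rewrite FobjE; apply: eq_bigr => i _.
under eq_bigr => j _ do rewrite T1_inner.
exact: sum_sqrt_cs_weight (a_ge0 i) (B_ge0 i) (B0 i).
Qed.

Lemma Fobj_T2 p : (forall i j, 0 <= Ain p i j) -> zero_on_neg (Ain p) ->
  Fobj Omega (T2 Omega b p) = col_bound p.
Proof.
move=> A_ge0 A0; rewrite FobjE exchange_big; apply: eq_bigr => j _ /=.
under eq_bigr => i _ do rewrite (mulrC (Ain _ _ _)) T2_inner.
exact: sum_sqrt_cs_weight (b_ge0 j) (A_ge0 ^~ j) (A0 ^~ j).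
Qed.

Lemma feasible_T1 p : feasible p -> feasible (T1 Omega a p).
Proof.
case=> A_ge0 B_ge0 rows cols; split=> // [i j|i].
  by rewrite T1_inner cs_weight_ge0.
by under eq_bigr => j _ do rewrite T1_inner; apply: sum_cs_weight_le.
Qed.

Lemma feasible_T2 p : feasible p -> feasible (T2 Omega b p).
Proof.
case=> A_ge0 B_ge0 rows cols; split=> // [i j|j].
  by rewrite T2_inner cs_weight_ge0.
by under eq_bigr => i _ do rewrite T2_inner; apply: sum_cs_weight_le.
Qed.

Lemma zero_on_neg_T1 p : zero_on_neg (Bin p) -> zero_on_neg (Ain (T1 Omega a p)).
Proof. by move=> B0 i j neg; rewrite T1_inner cs_weight_eq0 // B0. Qed.

Lemma zero_on_neg_T2 p : zero_on_neg (Ain p) -> zero_on_neg (Bin (T2 Omega b p)).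
Proof. by move=> A0 i j neg; rewrite T2_inner cs_weight_eq0 // A0. Qed.

Definition invariant p := feasible p /\ zero_on_neg (Bin p).

Definition step p := T2 Omega b (T1 Omega a p).

Lemma invariant_step p : invariant p -> invariant (step p).
Proof.
case=> feas B0; split; first exact/feasible_T2/feasible_T1.
exact/zero_on_neg_T2/zero_on_neg_T1.
Qed.

Lemma Fobj_step p : invariant p -> Fobj Omega (step p) = col_bound (T1 Omega a p).
Proof.
case=> feas B0; have [A_ge0 _ _ _] := feasible_T1 _ feas.
exact/Fobj_T2/zero_on_neg_T1.
Qed.

Lemma Fobj_le_T1 p : invariant p -> Fobj Omega p <= Fobj Omega (T1 Omega a p).
Proof.
by case=> [[A_ge0 B_ge0 rows cols] B0]; rewrite Fobj_T1 // Fobj_le_row_bound.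
Qed.

Lemma Fobj_T1_le_step p : invariant p -> Fobj Omega (T1 Omega a p) <= Fobj Omega (step p).
Proof.
move=> inv; rewrite Fobj_step //; apply: Fobj_le_col_bound.
by apply: feasible_T1; case: inv.
Qed.

Lemma Fobj_iter_nondecreasing p0 : invariant p0 ->
  nondecreasing_seq (fun k => Fobj Omega (iter k step p0)).
Proof.
move=> inv0; apply/nondecreasing_seqP => k.
have invk : invariant (iter k step p0) by elim: k => //= k; apply: invariant_step.
exact: le_trans (Fobj_le_T1 _ invk) (Fobj_T1_le_step _ invk).
Qed.

Lemma invariant_closed {s : nat -> pmx R m n} {L} :
  (forall t, invariant (s t)) -> cvg_entrywise s L -> invariant L.
Proof.
move=> inv s_cvg.
have A_cvg i j : Ain (s t) i j @[t --> \oo] --> Ain L i j by exact: (s_cvg _ _).1.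
have B_cvg i j : Bin (s t) i j @[t --> \oo] --> Bin L i j by exact: (s_cvg _ _).2.
split; first split.
- move=> i j; apply: cvgr_to_ge (A_cvg i j) _; apply: nearW => t.
  by have [[]] := inv t.
- move=> i j; apply: cvgr_to_ge (B_cvg i j) _; apply: nearW => t.
  by have [[]] := inv t.
- move=> i; have row_cvg : \sum_j Ain (s t) i j @[t --> \oo] --> \sum_j Ain L i j.
    by apply: cvg_sum => j; exact: A_cvg.
  by apply: cvgr_to_le row_cvg _; apply: nearW => t; have [[]] := inv t.
- move=> j; have col_cvg : \sum_i Bin (s t) i j @[t --> \oo] --> \sum_i Bin L i j.
    by apply: cvg_sum => i; exact: B_cvg.
  by apply: cvgr_to_le col_cvg _; apply: nearW => t; have [[]] := inv t.
move=> i j neg; apply/le_anti/andP; split.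
  by apply: cvgr_to_le (B_cvg i j) _; apply: nearW => t; have [_ ->] := inv t.
by apply: cvgr_to_ge (B_cvg i j) _; apply: nearW => t; have [_ ->] := inv t.
Qed.

Lemma T1_inner_cvg {s : nat -> pmx R m n} {L} i j : cvg_entrywise s L ->
  0 < wnorm2 (Bin L i) (Omega i) ->
  Ain (T1 Omega a (s t)) i j @[t --> \oo] --> Ain (T1 Omega a L) i j.
Proof.
move=> s_cvg D_gt0.
have D_cvg : wnorm2 (Bin (s t) i) (Omega i) @[t --> \oo] --> wnorm2 (Bin L i) (Omega i).
  by apply: cvg_wnorm2 => k; exact: (s_cvg _ _).2.
have formula_cvg : a i * Bin (s t) i j * Omega i j ^+ 2 / wnorm2 (Bin (s t) i) (Omega i)
    @[t --> \oo] --> a i * Bin L i j * Omega i j ^+ 2 / wnorm2 (Bin L i) (Omega i).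
  apply: cvgM; last by apply: cvgV; rewrite ?gt_eqF.
  apply: cvgM; last exact: cvg_cst.
  by apply: cvgM; [exact: cvg_cst | exact: (s_cvg _ _).2].
rewrite T1_inner /cs_weight D_gt0; apply: cvg_trans formula_cvg.
apply: near_eq_cvg; near=> t.
have Dt_gt0 : 0 < wnorm2 (Bin (s t) i) (Omega i) by near: t; exact: cvgr_gt D_cvg _ D_gt0.
by rewrite T1_inner /cs_weight Dt_gt0.
Unshelve. all: by end_near.
Qed.

(* [T1] is discontinuous at the rows [i] where [wnorm2 (Bin L i) (Omega i)]
   vanishes; zeroing those rows gives a lower bound that is continuous at [L]. *)
Lemma col_bound_T1_le_of_cvg {s : nat -> pmx R m n} {L c} :
  (forall t, invariant (s t)) -> cvg_entrywise s L ->
  (forall t, col_bound (T1 Omega a (s t)) <= c) -> col_bound (T1 Omega a L) <= c.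
Proof.
move=> inv s_cvg bound.
pose trunc p i j := if 0 < wnorm2 (Bin L i) (Omega i) then Ain (T1 Omega a p) i j else 0.
pose lower p := \sum_j Num.sqrt (b j * wnorm2 (trunc p ^~ j) (Omega ^~ j)).
have lower_L : lower L = col_bound (T1 Omega a L).
  apply: eq_bigr => j _; congr (Num.sqrt (_ * _)); apply: eq_bigr => i _.
  by rewrite /trunc T1_inner /cs_weight; case: ifP => // ->.
have lower_le t : lower (s t) <= col_bound (T1 Omega a (s t)).
  apply: ler_sum => j _; apply/ler_wsqrtr/ler_wpM2l => //.
  apply: ler_sum => i _; apply: ler_wpM2r; first exact: sqr_ge0.
  rewrite /trunc; case: ifP => // _.
  by have [A_ge0 _ _ _] := feasible_T1 _ (inv t).1; apply: A_ge0.
have lower_cvg : lower (s t) @[t --> \oo] --> lower L.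
  apply: cvg_sum => j; apply: continuous_cvg; first exact: sqrt_continuous.
  apply: cvgM; first exact: cvg_cst.
  apply: cvg_wnorm2 => i; rewrite /trunc; case: ifP => [D_gt0|_].
    exact: T1_inner_cvg.
  exact: cvg_cst.
rewrite -lower_L; apply: cvgr_to_le lower_cvg _; apply: nearW => t.
exact: le_trans (lower_le t) (bound t).
Qed.

Lemma Fobj_limit_point p0 L : invariant p0 ->
  limit_point (fun k => iter k step p0) L ->
  Fobj Omega (T1 Omega a L) = Fobj Omega (step L) /\ Fobj Omega (step L) = Fobj Omega L.
Proof.
move=> inv0 /limit_point_subseq [phi phi_ge s_cvg].
have inv k : invariant (iter k step p0) by elim: k => //= k; apply: invariant_step.
have invL : invariant L by apply: invariant_closed s_cvg => t; apply: inv.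
have Fobj_le_L k : Fobj Omega (iter k step p0) <= Fobj Omega L.
  apply: cvgr_to_ge (Fobj_cvg Omega s_cvg) _; apply: filterS (nbhs_infty_ge k) => t kt.
  exact: Fobj_iter_nondecreasing _ inv0 _ _ (leq_trans kt (phi_ge t)).
have col_le : col_bound (T1 Omega a L) <= Fobj Omega L.
  apply: (col_bound_T1_le_of_cvg _ s_cvg) => t; first exact: inv.
  by rewrite -Fobj_step //= -iterS Fobj_le_L.
have := Fobj_le_T1 _ invL; have := Fobj_T1_le_step _ invL; rewrite Fobj_step //.
by split; lra.
Qed.

End Iteration.

Arguments Fobj_limit_point {R m n Omega a b} a_ge0 b_ge0 {p0 L}.

Lemma invariant_of_inAt {R : realType} {m n : nat} {Omega : 'M[R]_(m, n)} {a b p} :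
  inAt Omega a b p -> invariant Omega a b p.
Proof.
case=> [[AB_ge0 rows A0 cols B0] zero_nonpos _ _]; split; first split.
- by move=> i j; have [] := AB_ge0 (lift ord0 i) (lift ord0 j).
- by move=> i j; have [] := AB_ge0 (lift ord0 i) (lift ord0 j).
- by move=> i; rewrite rows big_ord_recl lerDr; have [] := AB_ge0 (lift ord0 i) ord0.
- by move=> j; rewrite cols big_ord_recl lerDr; have [] := AB_ge0 ord0 (lift ord0 j).
by move=> i j /ltW /zero_nonpos [].
Qed.

Theorem lemma2p17 (R : realType) (m n : nat) (hm : (1 <= m)%N) (hn : (1 <= n)%N)
  (a : 'I_m -> R) (b : 'I_n -> R) (Omega : 'M[R]_(m, n))
  (ha : forall i, 0 < a i) (hb : forall j, 0 < b j)
  (p0 : pmx R m n) (hp0 : rel_interior (inAt Omega a b) p0)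
  (L : pmx R m n)
  (hL : limit_point (fun k => iter k (fun p => T2 Omega b (T1 Omega a p)) p0) L) :
  Fobj Omega (T1 Omega a L) = Fobj Omega (T2 Omega b (T1 Omega a L)) /\
  Fobj Omega (T2 Omega b (T1 Omega a L)) = Fobj Omega L.
Proof.
have inv0 := invariant_of_inAt hp0.1.
exact: (Fobj_limit_point (fun i => ltW (ha i)) (fun j => ltW (hb j)) inv0 hL).
Qed.
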